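(* Let $q\ge2$, $n\ge 1$, and ${\boldsymbol y}\in\Sigma_q^{n-1}$ with run length profile $(r_1,\dots,r_{\rho({\boldsymbol y})})$. Then $\mathsf{H}^{\mathsf{In}}_{1\text{-}\mathsf{Del}}({\boldsymbol y})$ is invariant to permutations of the run length profile of ${\boldsymbol y}$ and $$\mathsf{H}^{\mathsf{In}}_{1\text{-}\mathsf{Del}}({\boldsymbol y})=\log_2(nq)-\frac{1}{nq}\sum_{i=1}^{\rho({\boldsymbol y})}(r_i+1)\log_2(r_i+1).$$
   Context: $\Sigma_q=\{0,1,\dots,q-1\}$. For sequences ${\boldsymbol x}$ of length $N$ and ${\boldsymbol y}$ of length $\ell\le N$, $\omega_{{\boldsymbol y}}({\boldsymbol x})$ is the number of index tuples $1\le i_1<\dots<i_\ell\le N$ with $x_{i_j}=y_j$. The $k$-deletion channel with input length $n$ maps ${\boldsymbol x}\in\Sigma_q^n$ to ${\boldsymbol y}\in\Sigma_q^{n-k}$ with probability $\omega_{{\boldsymbol y}}({\boldsymbol x})/\binom nk$. Under uniform transmission $X$ is uniform on $\Sigma_q^n$ and $\mathsf{H}^{\mathsf{In}}_{k\text{-}\mathsf{Del}}({\boldsymbol y})=H(X\mid Y={\boldsymbol y})$ (base-2 logarithms), the posterior being $P({\boldsymbol x}\mid {\boldsymbol y})=\Pr\{{\boldsymbol y}\mid{\boldsymbol x}\}/\sum_{{\boldsymbol x}'}\Pr\{{\boldsymbol y}\mid{\boldsymbol x}'\}$. A run is a maximal block of identical consecutive symbols; $\rho({\boldsymbol y})$ is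 the number of runs and the run length profile is the vector $(r_1,\dots,r_{\rho({\boldsymbol y})})$ of run lengths in order from left to right. *)

From mathcomp Require Import all_boot.
From Stdlib Require Import Reals.
Set Implicit Arguments. Unset Strict Implicit. Unset Printing Implicit Defensive.

Definition log2 (x : R) : R := (ln x / ln 2)%R.

Definition plogp (p : R) : R :=
  if Req_EM_T p 0 then 0%R else (p * log2 p)%R.

(* omega_y(x): number of index tuples i_1 < ... < i_l with x_{i_j} = y_j,
   encoded bijectively as selection masks m with mask m x = y. *)
Definition omega (q N : nat) (y : seq 'I_q) (x : N.-tuple 'I_q) : nat :=
  #|[set m : N.-tuple bool | mask m x == y]|.

Definition del_prob (q n k : nat) (x : n.-tuple 'I_q) (y : (n - k).-tuple 'I_q) : R :=
  (INR (omega y x) / INR 'C(n, k))%R.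

(* posterior under uniform transmission *)
Definition posterior (q n k : nat) (y : (n - k).-tuple 'I_q) (x : n.-tuple 'I_q) : R :=
  (del_prob x y / \big[Rplus/0%R]_(x' : n.-tuple 'I_q) del_prob x' y)%R.

Definition H_in_del (q n k : nat) (y : (n - k).-tuple 'I_q) : R :=
  (- \big[Rplus/0%R]_(x : n.-tuple 'I_q) plogp (posterior y x))%R.

Fixpoint rl_profile (T : eqType) (s : seq T) : seq nat :=
  match s with
  | [::] => [::]
  | x :: s' =>
      match s' with
      | [::] => [:: 1%N]
      | z :: _ => let r := rl_profile s' in
                  if x == z then (head 0%N r).+1 :: behead r else 1%N :: r
      end
  end.

Definition nruns (T : eqType) (s : seq T) : nat := size (rl_profile s).

From HB Require Import structures.
From mathcomp Require Import all_boot.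
From Stdlib Require Import Reals Lra.
Set Implicit Arguments. Unset Strict Implicit. Unset Printing Implicit Defensive.

(* Under uniform transmission the posterior of x given y is proportional to
   omega_y(x), and the total weight is n q (a deleted symbol is one of q
   symbols at one of n positions), so
   H(X | Y = y) = log2 (n q) - (1 / n q) * sum_x omega_y(x) log2 omega_y(x).
   The x with omega_y(x) > 0 are the one-symbol insertions into y: lengthening
   the i-th run gives a single x with omega_y(x) = r_i + 1, and every other
   insertion gives an x with omega_y(x) = 1, which contributes 1 log2 1 = 0. *)

HB.instance Definition _ :=
  Monoid.isComLaw.Build R 0%R Rplus
    (fun a b c => esym (Rplus_assoc a b c)) Rplus_comm Rplus_0_l.
HB.instance Definition _ := Monoid.isMulLaw.Build R 0%R Rmult Rmult_0_l Rmult_0_r.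
HB.instance Definition _ :=
  Monoid.isAddLaw.Build R Rmult Rplus Rmult_plus_distr_r Rmult_plus_distr_l.

Lemma big_tuple_cons (T : finType) (V : Type) (idx : V)
    (op : Monoid.com_law idx) N (f : N.+1.-tuple T -> V) :
  \big[op/idx]_(t : N.+1.-tuple T) f t =
  \big[op/idx]_(a : T) \big[op/idx]_(t : N.-tuple T) f [tuple of a :: t].
Proof.
rewrite pair_big (reindex (fun p : T * N.-tuple T => [tuple of p.1 :: p.2])) //=.
exists (fun t : N.+1.-tuple T => (thead t, [tuple of behead t])).
  by case=> a t _; congr pair; apply: val_inj.
by move=> [[|a s] //= st] _; apply: val_inj.
Qed.

Lemma big_const_R (I : finType) (c : R) : \big[Rplus/0%R]_(i : I) c = (INR #|I| * c)%R.
Proof.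
rewrite big_const; elim: #|I| => [|k IH]; first by rewrite /= Rmult_0_l.
by rewrite iterS IH S_INR; ring.
Qed.

Lemma big_incr_at (I : finType) (F : nat -> R) (i0 : I) (g : I -> nat) :
  \big[Rplus/0%R]_i F ((i == i0) + g i)%nat =
  (\big[Rplus/0%R]_i F (g i) + (F (g i0).+1 - F (g i0)))%R.
Proof.
rewrite (bigD1 i0) // [in RHS](bigD1 i0) //= eqxx add1n.
rewrite (eq_bigr (fun i => F (g i))); first by ring.
by move=> i /negbTE ->.
Qed.

Fixpoint subseq_count (T : eqType) (x y : seq T) : nat :=
  match x with
  | [::] => y == [::]
  | a :: x' =>
      subseq_count x' y + (if y is b :: y' then (a == b) * subseq_count x' y' else 0)
  end.

Section SubseqCount.
Variable T : eqType.
Implicit Types (b : T) (s x y : seq T).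

Lemma subseq_count_cons a x b y :
  subseq_count (a :: x) (b :: y) = subseq_count x (b :: y) + (a == b) * subseq_count x y.
Proof. by []. Qed.

Lemma subseq_count_nil x : subseq_count x [::] = 1.
Proof. by elim: x => //= _ x ->. Qed.

Lemma subseq_count_small x y : size x < size y -> subseq_count x y = 0.
Proof.
elim: x y => [|a x IH] [|b y] //= lt_xy.
by rewrite (IH (b :: y)) ?IH ?muln0 // ltnW.
Qed.

Lemma subseq_count_eq_size x y : size x = size y -> subseq_count x y = (x == y).
Proof.
elim: x y => [|a x IH] [|b y] //= [eq_xy].
rewrite subseq_count_small ?eq_xy // IH // eqseq_cons.
by case: (a == b); case: (x == y).
Qed.

Definition run_head (s : seq T) : nat := head 0 (rl_profile s).

Lemma rl_profile_cons_cons b c z :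
  rl_profile (b :: c :: z) =
  if b == c then (run_head (c :: z)).+1 :: behead (rl_profile (c :: z))
  else 1 :: rl_profile (c :: z).
Proof. by []. Qed.

Lemma rl_profile_cons b y :
  rl_profile (b :: y) = run_head (b :: y) :: behead (rl_profile (b :: y)).
Proof. by case: y => [|c z] //; rewrite /run_head rl_profile_cons_cons; case: (b == c). Qed.

Lemma sumn_rl_profile s : sumn (rl_profile s) = size s.
Proof.
elim: s => [|b [|c z] IH] //.
have -> : size [:: b, c & z] = (sumn (rl_profile (c :: z))).+1 by rewrite IH.
rewrite rl_profile_cons_cons [rl_profile (c :: z)]rl_profile_cons.
by case: (b == c); rewrite /= ?addSn ?add1n.
Qed.

Lemma big_rl_profile_cons (F : nat -> R) b y :
  (\big[Rplus/0%R]_(r <- rl_profile (b :: y)) (F r.+1 - F 1%nat) =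
   \big[Rplus/0%R]_(r <- rl_profile y) (F r.+1 - F 1%nat)
   + (F (run_head (b :: y)).+1 - F (run_head (b :: y))))%R.
Proof.
case: y => [|c z]; first by rewrite /run_head /= big_seq1 big_nil; ring.
rewrite /run_head rl_profile_cons_cons [rl_profile (c :: z)]rl_profile_cons.
by case: (b == c); rewrite /= !big_cons; ring.
Qed.

(* Deleting a symbol from b :: y yields y exactly when it lies in the first run. *)
Lemma subseq_count_run_head b y : subseq_count (b :: y) y = run_head (b :: y).
Proof.
elim: y b => [|c z IH] b //.
rewrite subseq_count_cons subseq_count_eq_size // eqxx IH /run_head rl_profile_cons_cons.
by case: (b == c); rewrite ?mul1n ?mul0n.
Qed.

End SubseqCount.

Lemma omegaE q N (y : seq 'I_q) (x : N.-tuple 'I_q) : omega y x = subseq_count x y.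
Proof.
rewrite /omega -sum1dep_card big_mkcond /=.
elim: N x y => [|N IH] x y.
  rewrite (tuple0 x) (eq_bigr (fun _ => nat_of_bool (y == [::]))) => [|m _].
    by rewrite sum_nat_const card_tuple mul1n.
  by rewrite (tuple0 m) eq_sym.
case: x => [[|a s] //= sN]; have sN' : size s == N by [].
rewrite big_tuple_cons big_bool /= -(IH (Tuple sN')) addnC; congr addn.
case: y => [|b y]; first by rewrite big1 // => m _.
case: eqP => [<-|neq_ab] /=.
  by rewrite mul1n -(IH (Tuple sN')); apply: eq_bigr => m _; rewrite eqseq_cons eqxx.
by rewrite mul0n big1 // => m _; rewrite eqseq_cons; case: eqP.
Qed.

Section Del1Moment.
Variables (T : finType) (F : nat -> R).

(* Of the #|T| * (size y + 1) one-symbol insertions into y, the r_i + 1 ways of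
   inserting the symbol of run i inside or next to it all produce one word, of
   weight r_i + 1; the remaining insertions produce distinct words of weight 1. *)
Definition del1_moment (y : seq T) : R :=
  (\big[Rplus/0%R]_(r <- rl_profile y) (F r.+1 - F 1%nat) +
   (INR (#|T| * (size y).+1) - INR (size y)) * F 1%nat)%R.

Lemma del1_moment_cons b y :
  del1_moment (b :: y) =
  (del1_moment y + (F (run_head (b :: y)).+1 - F (run_head (b :: y)))
   + (INR #|T| - 1) * F 1%nat)%R.
Proof.
rewrite /del1_moment big_rl_profile_cons !mult_INR [size (b :: y)]/= !S_INR.
(* The two copies of [run_head (b :: y)] differ by a convertible coercion of the
   element type, which [ring] would treat as distinct atoms. *)
by move: (run_head (b :: y)) => h; ring.
Qed.

Hypothesis F0 : F 0 = 0%R.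

Lemma big_subseq_count_del1 N (y : seq T) : size y = N ->
  \big[Rplus/0%R]_(x : N.+1.-tuple T) F (subseq_count x y) = del1_moment y.
Proof.
move=> <-; elim: y => [|b y IH].
  rewrite (eq_bigr (fun _ => F 1%nat)) => [|x _]; last by rewrite subseq_count_nil.
  by rewrite big_const_R card_tuple expn1 /del1_moment big_nil /= muln1; ring.
pose h := subseq_count (b :: y) y.
have row a :
    \big[Rplus/0%R]_(t : (size y).+1.-tuple T) F (subseq_count (a :: t) (b :: y)) =
    if a == b then (\big[Rplus/0%R]_(t : (size y).+1.-tuple T) F (subseq_count t y)
                    + (F h.+1 - F h))%R
    else F 1%nat.
  transitivity (\big[Rplus/0%R]_(t : (size y).+1.-tuple T)
                  F ((t == in_tuple (b :: y)) + (a == b) * subseq_count t y)%nat).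
    by apply: eq_bigr => t _; rewrite subseq_count_cons subseq_count_eq_size ?size_tuple.
  rewrite (big_incr_at F _ (fun t : (size y).+1.-tuple T => (a == b) * subseq_count t y)).
  case: (a == b).
    by rewrite mul1n; under eq_bigr do rewrite mul1n.
  by rewrite mul0n F0 big1 //; ring.
have split_b : \big[Rplus/0%R]_(a : T) F 1%nat =
               (F 1%nat + \big[Rplus/0%R]_(a | a != b) F 1%nat)%R.
  by rewrite (bigD1 b).
rewrite big_const_R in split_b.
rewrite big_tuple_cons (eq_bigr _ (fun a _ => row a)) (bigD1 b) //= eqxx.
rewrite (eq_bigr (fun _ : T => F 1%nat)) => [|a neq_ab]; last by rewrite (negbTE neq_ab).
by rewrite IH /h subseq_count_run_head del1_moment_cons [LHS]/=; lra.
Qed.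

End Del1Moment.

Lemma del1_moment_INR (T : finType) (y : seq T) :
  del1_moment INR y = INR (#|T| * (size y).+1).
Proof.
have sum_runs s : \big[Rplus/0%R]_(r <- s) (INR r.+1 - INR 1)%R = INR (sumn s).
  elim: s => [|r s IH]; first by rewrite big_nil.
  by rewrite big_cons IH (plus_INR r (sumn s)) S_INR /=; ring.
by rewrite /del1_moment sum_runs -(sumn_rl_profile y) [INR 1]/=; ring.
Qed.

Lemma plogpE p : plogp p = (p * log2 p)%R.
Proof. by rewrite /plogp; case: Req_EM_T => [p0|_] //=; rewrite p0; ring. Qed.

Lemma plogp0 : plogp 0 = 0%R.
Proof. by rewrite plogpE Rmult_0_l. Qed.

Lemma plogp1 : plogp 1 = 0%R.
Proof. by rewrite plogpE /log2 ln_1; field; have := ln_lt_2; lra. Qed.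

Lemma del1_moment_plogp (T : finType) (y : seq T) :
  del1_moment (fun c => plogp (INR c)) y =
  \big[Rplus/0%R]_(r <- rl_profile y) (INR r.+1 * log2 (INR r.+1))%R.
Proof.
rewrite /del1_moment [INR 1]/= plogp1 Rmult_0_r Rplus_0_r.
by apply: eq_bigr => r _; rewrite Rminus_0_r plogpE.
Qed.

Lemma plogp_div w N : (0 <= w)%R -> (0 < N)%R ->
  plogp (w / N) = (/ N * plogp w - log2 N / N * w)%R.
Proof.
move=> w_ge0 N_gt0; rewrite !plogpE.
case: (Rle_lt_or_eq_dec _ _ w_ge0) => [w_gt0|<-]; last by rewrite /Rdiv; ring.
rewrite /log2 /Rdiv ln_mult ?ln_Rinv //; last exact: Rinv_0_lt_compat.
by field; split; [lra | have := ln_lt_2; lra].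
Qed.

Lemma entropy_normalize (I : finType) (w : I -> R) :
  (forall i, 0 <= w i)%R -> (0 < \big[Rplus/0%R]_i w i)%R ->
  (- (\big[Rplus/0%R]_i plogp (w i / \big[Rplus/0%R]_j w j)) =
   log2 (\big[Rplus/0%R]_i w i) - / (\big[Rplus/0%R]_i w i) * \big[Rplus/0%R]_i plogp (w i))%R.
Proof.
set N := \big[Rplus/0%R]_i w i => w_ge0 N_gt0.
rewrite (eq_bigr _ (fun i _ => plogp_div (w_ge0 i) N_gt0)).
rewrite (eq_bigr (fun i => / N * plogp (w i) + (- (log2 N / N)) * w i)%R) => [|i _];
  last by ring.
by rewrite big_split -!big_distrr /= -/N; field; lra.
Qed.

Lemma posteriorE q n k (y : (n - k).-tuple 'I_q) (x : n.-tuple 'I_q) : k <= n ->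
  posterior y x = (INR (omega y x) / \big[Rplus/0%R]_(x' : n.-tuple 'I_q) INR (omega y x'))%R.
Proof.
move=> le_kn; rewrite /posterior /del_prob /Rdiv -big_distrl /= Rinv_mult Rinv_inv.
set C := INR 'C(n, k).
have C_neq0 : C <> 0%R by apply: not_0_INR; apply/eqP; rewrite -lt0n bin_gt0.
by rewrite Rmult_assoc -(Rmult_assoc (/ C)) (Rmult_comm (/ C)) Rmult_assoc Rinv_l ?Rmult_1_r.
Qed.

Lemma H_in_delE q n k (y : (n - k).-tuple 'I_q) : k <= n ->
  H_in_del y =
  (- \big[Rplus/0%R]_(x : n.-tuple 'I_q)
       plogp (INR (omega y x) / \big[Rplus/0%R]_(x' : n.-tuple 'I_q) INR (omega y x')))%R.
Proof. by move=> le_kn; congr Ropp; apply: eq_bigr => x _; rewrite posteriorE. Qed.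

Lemma H_in_del1 q n (y : (n - 1).-tuple 'I_q) : 0 < q -> 0 < n ->
  H_in_del y =
    (log2 (INR (n * q)) -
     / INR (n * q) * \big[Rplus/0%R]_(r <- rl_profile y) (INR r.+1 * log2 (INR r.+1)))%R.
Proof.
case: n y => // m y q_gt0 _.
have size_y : size y = m by rewrite size_tuple subn1.
have weights F : F 0 = 0%R ->
    \big[Rplus/0%R]_(x : m.+1.-tuple 'I_q) F (omega y x) = del1_moment F y.
  by move=> F0; under eq_bigr do rewrite omegaE; apply: big_subseq_count_del1.
have total : \big[Rplus/0%R]_(x : m.+1.-tuple 'I_q) INR (omega y x) = INR (m.+1 * q).
  by rewrite weights // del1_moment_INR card_ord size_y mulnC.
rewrite H_in_delE // entropy_normalize => [|x|]; last 2 first.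
- exact: pos_INR.
- by rewrite total; apply: lt_0_INR; apply/ltP; rewrite muln_gt0.
rewrite total (weights (fun c => plogp (INR c))) ?del1_moment_plogp //; exact: plogp0.
Qed.

Theorem theorem1 (q n : nat) (hq : (2 <= q)%N) (hn : (1 <= n)%N)
  (y : (n - 1).-tuple 'I_q) :
  (forall y' : (n - 1).-tuple 'I_q,
      perm_eq (rl_profile y) (rl_profile y') ->
      H_in_del y' = H_in_del y) /\
  H_in_del y =
    (log2 (INR (n * q)) -
     / INR (n * q) *
       \big[Rplus/0%R]_(r <- rl_profile y) (INR r.+1 * log2 (INR r.+1)))%R.
Proof.
have q_gt0 : 0 < q by apply: leq_trans hq.
split; last exact: H_in_del1.
move=> y' perm_yy'; rewrite !H_in_del1 //.
by rewrite (perm_big _ perm_yy').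
Qed.
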